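(* Let $A,B$ be Pareto sets of size $n$ each, sorted lexicographically, with Minkowski matrix $M_{ij}=A_i+B_j$, and let a query range $R=[x_{\min},x_{\max})\times[y_{\min},y_{\max})$ be given. The sweep procedure returns the lexicographically smallest entry of $M$ lying in $R$ (or reports that none exists), and it runs in $\mathcal{O}(n)$ time.
   Context: A Pareto set is a set $S\subset\mathbb{R}^2$ in which no point dominates another ($p$ dominates $p'$ if $p\ne p'$, $p.x\le p'.x$, $p.y\le p'.y$); sorted lexicographically, its $x$-coordinates strictly increase and $y$-coordinates strictly decrease, so for $s\ge i$, $t\ge j$ the entry $M_{st}$ has $x$-coordinate at least and $y$-coordinate at most those of $M_{ij}$. Entries of $M$ are computed on demand. The sweep procedure: keep a current candidate (initially none) and a current row index $i$, starting at $i=n$ in column $1$. For columns $j=1,\dots,n$ in order: starting at row $i$ of column $j$, move upward (decrease $i$) by linear search as long as $i\ge 2$ and the entry $M_{i-1,j}$ still satisfies $x\ge x_{\min}$ and $y<y_{\max}$ (no movement if $M_{ij}$ itself violates $x\ge x_{\min}$ or $y<y_{\max}$); then if $M_{ij}\in R$ and it is lexicographically smaller than the current candidate (or there is no candidate yet), make it the candidate; then proceed to column $j+1$ keeping the same row index $i$. After the last column, return the candidate. *)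

From mathcomp Require Import all_boot all_order all_algebra.
Set Implicit Arguments. Unset Strict Implicit. Unset Printing Implicit Defensive.
Import Order.TTheory GRing.Theory Num.Theory.
Local Open Scope ring_scope.

Section Pareto.
Variable R : realFieldType.
Notation pt := (R * R)%type.

Definition dominates (p q : pt) : bool :=
  [&& p != q, p.1 <= q.1 & p.2 <= q.2].

Definition pareto (s : seq pt) : Prop :=
  forall p q, p \in s -> q \in s -> ~~ dominates p q.

Definition lex_lt (p q : pt) : bool :=
  (p.1 < q.1) || ((p.1 == q.1) && (p.2 < q.2)).
Definition lex_le (p q : pt) : bool := (p == q) || lex_lt p q.

(* A Pareto set of size n, listed in lexicographically sorted order
   (this also forces the n points to be distinct). *)
Definition sorted_pareto (n : nat) (s : seq pt) : Prop :=
  [/\ size s = n, pareto s & sorted lex_lt s].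

(* Minkowski matrix, 0-indexed: M i j = A_i + B_j *)
Definition mink (A B : seq pt) (i j : nat) : pt :=
  ((nth (0, 0) A i).1 + (nth (0, 0) B j).1,
   (nth (0, 0) A i).2 + (nth (0, 0) B j).2).

Definition in_range (xmin xmax ymin ymax : R) (p : pt) : bool :=
  [&& xmin <= p.1, p.1 < xmax, ymin <= p.2 & p.2 < ymax].

Definition climb_ok (xmin ymax : R) (p : pt) : bool :=
  (xmin <= p.1) && (p.2 < ymax).

(* Upward linear search in column j from current row i (0-indexed; the
   paper's condition "i >= 2" becomes "i >= 1").  Returns the new row and
   the number of matrix entries computed. *)
Fixpoint climb (A B : seq pt) (xmin ymax : R) (j i : nat) : nat * nat :=
  match i with
  | 0 => (0%N, 0%N)
  | i'.+1 =>
      if climb_ok xmin ymax (mink A B i' j) then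
        let r := climb A B xmin ymax j i' in (r.1, r.2.+1)
      else (i, 1%N)
  end.

Definition sweep_step (A B : seq pt) (xmin xmax ymin ymax : R)
    (st : option pt * nat * nat) (j : nat) : option pt * nat * nat :=
  let: (cand, i, cost) := st in
  let r := climb A B xmin ymax j i in
  let p := mink A B r.1 j in
  let better := if cand is Some c then lex_lt p c else true in
  let cand' := if in_range xmin xmax ymin ymax p && better then Some p
               else cand in
  (cand', r.1, (cost + r.2 + 1)%N).

Definition sweep_full (n : nat) (A B : seq pt) (xmin xmax ymin ymax : R)
  : option pt * nat * nat :=
  foldl (sweep_step A B xmin xmax ymin ymax) (None, n.-1, 0%N) (iota 0 n).

Definition sweep (n : nat) (A B : seq pt) (xmin xmax ymin ymax : R)
  : option pt := (sweep_full n A B xmin xmax ymin ymax).1.1.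

(* number of elementary steps: matrix entries computed + one per column *)
Definition sweep_cost (n : nat) (A B : seq pt) (xmin xmax ymin ymax : R)
  : nat := (sweep_full n A B xmin xmax ymin ymax).2.

Definition lex_min_in_range (n : nat) (A B : seq pt) (xmin xmax ymin ymax : R)
    (res : option pt) : Prop :=
  match res with
  | None => forall i j, (i < n)%N -> (j < n)%N ->
              ~~ in_range xmin xmax ymin ymax (mink A B i j)
  | Some p => [/\ exists i j, [/\ (i < n)%N, (j < n)%N & p = mink A B i j],
                 in_range xmin xmax ymin ymax p
               & forall i j, (i < n)%N -> (j < n)%N ->
                   in_range xmin xmax ymin ymax (mink A B i j) ->
                   lex_le p (mink A B i j)]
  end.

End Pareto.

(* Increasing either index of M moves the entry weakly right and down, and
   increasing the row index moves it strictly right.  So the climbing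
   condition x >= xmin, y < ymax is upward closed in both indices: the row
   pointer only moves up and always rests on the topmost row of the current
   column satisfying it, and that entry is the lexicographically least
   in-range entry of the column whenever the column has one.  Since the
   pointer never moves down, cost + pointer grows by at most 2 per column. *)

From mathcomp Require Import all_boot all_order all_algebra.
From mathcomp Require Import lra zify.
Set Implicit Arguments. Unset Strict Implicit.
Import Order.TTheory GRing.Theory Num.Theory.
Local Open Scope ring_scope.

Lemma foldl_iota_ind (S : Type) (step : S -> nat -> S) (P : nat -> S -> Prop)
    (s0 : S) (m : nat) :
  P 0%N s0 -> (forall j s, (j < m)%N -> P j s -> P j.+1 (step s j)) ->
  P m (foldl step s0 (iota 0 m)).
Proof.
move=> P0 Pstep; elim: m Pstep => // m IH Pstep.
rewrite -addn1 iotaD foldl_cat add0n addn1 /=.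
apply: (Pstep) => //; apply: IH => j s jm; apply: Pstep; lia.
Qed.

Section Lex.
Variable R : realFieldType.
Implicit Types p q r : (R * R)%type.

Lemma lex_lt_trans : transitive (@lex_lt R).
Proof. by move=> [a b] [c d] [e f]; rewrite /lex_lt /=; lra. Qed.

Lemma lex_le_trans : transitive (@lex_le R).
Proof.
by move=> [a b] [c d] [e f]; rewrite /lex_le /lex_lt !xpair_eqE /=; lra.
Qed.

Lemma lex_lt_le_trans p q r : lex_lt p q -> lex_le q r -> lex_le p r.
Proof.
by case: p q r => [a b] [c d] [e f]; rewrite /lex_le /lex_lt !xpair_eqE /=; lra.
Qed.

Lemma lex_leNgt p q : lex_le p q = ~~ lex_lt q p.
Proof.
apply/idP/idP; case: p q => [a b] [c d];
  rewrite /lex_le /lex_lt !xpair_eqE /=; lra.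
Qed.

Lemma sorted_pareto_nth_lt (s : seq (R * R)) m i k : sorted_pareto m s ->
    (i < k < m)%N ->
  (nth (0, 0) s i).1 < (nth (0, 0) s k).1 /\
  (nth (0, 0) s k).2 < (nth (0, 0) s i).2.
Proof.
case=> sz par srt /andP[ik km].
have lt_ik : lex_lt (nth (0, 0) s i) (nth (0, 0) s k).
  by apply: (sorted_ltn_nth lex_lt_trans); rewrite ?inE ?sz //; lia.
have := par _ _ (mem_nth (0, 0) (_ : (i < size s)%N))
                (mem_nth (0, 0) (_ : (k < size s)%N)).
move=> /(_ ltac:(rewrite sz; lia) ltac:(rewrite sz; lia)).
move: lt_ik; case: (nth _ s i) => a b; case: (nth _ s k) => c d.
by rewrite /dominates /lex_lt xpair_eqE /=; lra.
Qed.

Lemma sorted_pareto_nth_le (s : seq (R * R)) m i k : sorted_pareto m s ->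
    (i <= k < m)%N ->
  (nth (0, 0) s i).1 <= (nth (0, 0) s k).1 /\
  (nth (0, 0) s k).2 <= (nth (0, 0) s i).2.
Proof.
move=> sp /andP[]; rewrite leq_eqVlt => /orP[/eqP-> //| ik km].
have ikm : (i < k < m)%N by rewrite ik.
by have [] := sorted_pareto_nth_lt sp ikm; split; lra.
Qed.

End Lex.

Section Climb.
Variable R : realFieldType.
Variables (A B : seq (R * R)) (xmin ymax : R) (j : nat).
Notation ok k := (climb_ok xmin ymax (mink A B k j)).

Lemma climb_cost i :
  ((climb A B xmin ymax j i).1 + (climb A B xmin ymax j i).2 <= i.+1)%N.
Proof. by elim: i => [//|i IH] /=; case: ifP => //= _; lia. Qed.

Lemma climb_spec i : let r := (climb A B xmin ymax j i).1 in
  [/\ (r <= i)%N, forall k, (r <= k < i)%N -> ok k & (0 < r)%N -> ~~ ok r.-1].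
Proof.
elim: i => [|i IH] /=; first by split=> // k; lia.
case: ifP => //= ok_i; last by split=> // k; lia.
case: IH => r_le ok_r r_top; split=> //; first lia.
move=> k /andP[rk]; rewrite ltnS leq_eqVlt => /orP[/eqP-> //|ki].
by apply: ok_r; rewrite rk.
Qed.

End Climb.

Section Sweep.
Variable R : realFieldType.
Variables (n : nat) (A B : seq (R * R)) (xmin xmax ymin ymax : R).
Hypotheses (HA : sorted_pareto n A) (HB : sorted_pareto n B).
Notation M := (mink A B).
Notation ok k j := (climb_ok xmin ymax (M k j)).
Notation in_R := (in_range xmin xmax ymin ymax).

Lemma mink_x_lt k k' j : (k < k' < n)%N -> (M k j).1 < (M k' j).1.
Proof.
by move=> kk'; have [] := sorted_pareto_nth_lt HA kk'; rewrite /mink /=; lra.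
Qed.

Lemma mink_le k k' j j' : (k <= k' < n)%N -> (j <= j' < n)%N ->
  (M k j).1 <= (M k' j').1 /\ (M k' j').2 <= (M k j).2.
Proof.
move=> kk' jj'; have [] := sorted_pareto_nth_le HA kk'.
by have [] := sorted_pareto_nth_le HB jj'; rewrite /mink /=; split; lra.
Qed.

Lemma climb_ok_mono k k' j j' : (k <= k' < n)%N -> (j <= j' < n)%N ->
  ok k j -> ok k' j'.
Proof. by move=> kk' jj'; have [] := mink_le kk' jj'; rewrite /climb_ok; lra. Qed.

Lemma in_range_climb_ok p : in_R p -> climb_ok xmin ymax p.
Proof. by rewrite /in_range /climb_ok => /and4P[-> _ _ ->]. Qed.

Lemma climb_topmost j i : (j < n)%N -> (i <= n.-1)%N ->
    i = n.-1 \/ ok i j.-1 ->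
  let r := (climb A B xmin ymax j i).1 in
  [/\ (r <= n.-1)%N, r = n.-1 \/ ok r j & forall k, (k < n)%N -> ok k j -> (r <= k)%N].
Proof.
move=> jn i_n start /=; have [r_le ok_r r_top] := climb_spec A B xmin ymax j i.
set r := (climb _ _ _ _ _ _).1 in r_le ok_r r_top *.
split; first lia.
- move: r_le; rewrite leq_eqVlt => /orP[/eqP r_i|r_i]; last by right; apply: ok_r; rewrite leqnn r_i.
  rewrite r_i; case: start => [|ok_i]; [by left | right].
  by apply: climb_ok_mono ok_i; lia.
- move=> k kn ok_k; rewrite leqNgt; apply/negP => kr.
  by move: (r_top ltac:(lia)); rewrite (climb_ok_mono _ _ ok_k) //; lia.
Qed.

Lemma column_lex_min j r : (j < n)%N -> r = n.-1 \/ ok r j ->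
    (forall k, (k < n)%N -> ok k j -> (r <= k)%N) ->
  forall k, (k < n)%N -> in_R (M k j) -> in_R (M r j) /\ lex_le (M r j) (M k j).
Proof.
move=> jn ok_r r_top k kn in_k.
have ok_k := in_range_climb_ok in_k.
have rk := r_top k kn ok_k.
have {}ok_r : ok r j by case: ok_r => [r_last|//]; have -> : r = k by lia.
split.
  have rkn : (r <= k < n)%N by rewrite rk.
  have jj : (j <= j < n)%N by rewrite leqnn.
  move: in_k ok_r; have [] := mink_le rkn jj.
  by rewrite /in_range /climb_ok; lra.
move: rk; rewrite leq_eqVlt => /orP[/eqP-> | rk]; first by rewrite /lex_le eqxx.
by rewrite /lex_le /lex_lt mink_x_lt ?rk ?orbT.
Qed.

Definition lex_min_cols (m : nat) (cand : option (R * R)) : Prop :=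
  match cand with
  | None => forall i j, (i < n)%N -> (j < m)%N -> ~~ in_R (M i j)
  | Some p => [/\ exists i j, [/\ (i < n)%N, (j < n)%N & p = M i j],
                 in_R p
               & forall i j, (i < n)%N -> (j < m)%N -> in_R (M i j) ->
                   lex_le p (M i j)]
  end.

Lemma lex_min_cols_update j r cand : (j < n)%N -> (r < n)%N ->
    lex_min_cols j cand ->
    (forall k, (k < n)%N -> in_R (M k j) -> in_R (M r j) /\ lex_le (M r j) (M k j)) ->
  lex_min_cols j.+1
    (if in_R (M r j) && (if cand is Some c then lex_lt (M r j) c else true)
     then Some (M r j) else cand).
Proof.
move=> jn rn + col; set p := M r j.
have cols j' : (j' < j.+1)%N -> j' = j \/ (j' < j)%N by rewrite ltnS; lia.
case: cand => [c [c_entry in_c c_min]|none]; case: ifP => [/andP[in_p p_lt] | p_no].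
- split=> // [|k j' kn /cols[->|j'j] in_k]; first by exists r, j.
  + by case: (col k kn in_k).
  + exact: lex_lt_le_trans p_lt (c_min _ _ kn j'j in_k).
- split=> // k j' kn /cols[->|j'j] in_k; last exact: c_min.
  have [in_p p_le] := col k kn in_k.
  by apply: lex_le_trans p_le; rewrite lex_leNgt; apply: contraFN p_no => ->; rewrite in_p.
- split=> // [|k j' kn /cols[->|j'j] in_k]; first by exists r, j.
  + by case: (col k kn in_k).
  + by move: (none _ _ kn j'j); rewrite in_k.
- move=> k j' kn /cols[->|j'j]; last exact: none.
  by apply/negP => /(col k kn)[in_p _]; rewrite in_p in p_no.
Qed.

(* The pointer has either never moved (last row) or rests on a climbable entry
   of the previous column; at j = 0 only the first case occurs, so the
   truncated j.-1 is harmless. *)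
Definition sweep_inv (j : nat) (st : option (R * R) * nat * nat) : Prop :=
  let: (cand, i, _) := st in
  [/\ (i <= n.-1)%N, i = n.-1 \/ ok i j.-1 & lex_min_cols j cand].

Lemma sweep_step_inv j st : (j < n)%N -> sweep_inv j st ->
  sweep_inv j.+1 (sweep_step A B xmin xmax ymin ymax st j).
Proof.
case: st => [[cand i] cost] jn [i_n start cand_ok].
have [r_n r_start r_top] := climb_topmost jn i_n start.
rewrite /sweep_step; set r := (climb _ _ _ _ _ _).1 in r_n r_start r_top *.
split=> //; apply: lex_min_cols_update => //; first lia.
exact: column_lex_min.
Qed.

Lemma sweep_correct :
  lex_min_in_range n A B xmin xmax ymin ymax (sweep n A B xmin xmax ymin ymax).
Proof.
have : sweep_inv n (sweep_full n A B xmin xmax ymin ymax).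
  apply: foldl_iota_ind => [|j st jn]; first by split=> //; left.
  exact: sweep_step_inv.
by rewrite /sweep; case: sweep_full => [[[p|] ?] ?] [].
Qed.

End Sweep.

Lemma sweep_cost_le (R : realFieldType) n (A B : seq (R * R)) (xmin xmax ymin ymax : R) :
  (sweep_cost n A B xmin xmax ymin ymax <= 2 * n + n.-1)%N.
Proof.
suff : ((sweep_full n A B xmin xmax ymin ymax).2 +
        (sweep_full n A B xmin xmax ymin ymax).1.2 <= 2 * n + n.-1)%N.
  by rewrite /sweep_cost; lia.
apply: (foldl_iota_ind (P := fun j st => (st.2 + st.1.2 <= 2 * j + n.-1)%N)).
  by rewrite /=; lia.
move=> j [[_ i] cost] _ /=; have := climb_cost A B xmin ymax j i; lia.
Qed.

Theorem lemma2 :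
  (forall (R : realFieldType) (n : nat) (A B : seq (R * R)) (xmin xmax ymin ymax : R),
      sorted_pareto n A -> sorted_pareto n B ->
      lex_min_in_range n A B xmin xmax ymin ymax (sweep n A B xmin xmax ymin ymax))
  /\
  (exists C : nat, forall (R : realFieldType) (n : nat) (A B : seq (R * R))
      (xmin xmax ymin ymax : R),
      sorted_pareto n A -> sorted_pareto n B ->
      (sweep_cost n A B xmin xmax ymin ymax <= C * n)%N).
Proof.
split; first by move=> *; apply: sweep_correct.
exists 3%N => R n A B xmin xmax ymin ymax _ _.
by have := sweep_cost_le n A B xmin xmax ymin ymax; lia.
Qed.
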